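(* Let $G$ be a group, $A$ a semilattice of groups, $\Theta=(\theta,w)$ a twisted partial action of $G$ on $A$, $\Lambda=\Lambda^\Theta=(\alpha,\lambda,f)$ the corresponding twisted $E(A)*_\theta G$-module structure on $A$, and $\Theta'=\Theta^\Lambda=(\theta',w')$ the twisted partial action of $\mathcal G(E(A)*_\theta G)$ on $A$ coming from $\Lambda$. Then there is an isomorphism $\nu:G\to\mathcal G(E(A)*_\theta G)$ such that $\Theta=\Theta'\circ\nu$, that is, $\theta_x=\theta'_{\nu(x)}$ and $w_{x,y}=w'_{\nu(x),\nu(y)}$ for all $x,y\in G$.
   Context: A semilattice of groups is an inverse semigroup $A$ with central idempotents; $A_e=\{a: aa^{-1}=a^{-1}a=e\}$. Multipliers of a semigroup $T$: pairs $(L,R)$ of maps with $L(st)=L(s)t$, $R(st)=sR(t)$, $sL(t)=R(s)t$, written $ws=L(s)$, $sw=R(s)$; monoid $\mathcal M(T)$, unit group $\mathcal U(\mathcal M(T))$. A twisted partial action of a group $H$ on $A$ is $(\theta,w)$ with isomorphisms $\theta_x:D_{x^{-1}}\to D_x$ of nonempty ideals and $w_{x,y}\in\mathcal U(\mathcal M(D_xD_{xy}))$ with (i) $D_x^2=D_x$, $D_xD_y=D_yD_x$; (ii) $D_1=A$, $\theta_1=\mathrm{id}$; (iii) $\theta_x(D_{x^{-1}}D_y)=D_xD_{xy}$; (iv) $\theta_x\theta_y(s)=w_{x,y}\theta_{xy}(s)w_{x,y}^{-1}$ on $D_{y^{-1}}D_{y^{-1}x^{-1}}$; (v) $w_{1,x}=w_{x,1}$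 = identity of $D_x$; (vi) $\theta_x(sw_{y,z})w_{x,yz}=\theta_x(s)w_{x,y}w_{xy,z}$ on $D_{x^{-1}}D_yD_{yz}$. The $\theta_x$ restrict to a partial action $\theta$ of $G$ on $E(A)$; $E(A)*_\theta G=\{e\delta_x: e\in E(D_x)\}$, $e\delta_x\cdot e'\delta_y=\theta_x(\theta_x^{-1}(e)e')\delta_{xy}$, is an $E$-unitary inverse semigroup; $\mathcal G(\cdot)$ denotes the maximum group image (quotient by the minimum group congruence $\sigma$). $\Lambda^\Theta=(\alpha,\lambda,f)$: $\alpha(e\delta_1)=e$, $\lambda_{e\delta_x}(a)=\theta_x(\theta_x^{-1}(e)a)$, $f(e\delta_x,e'\delta_y)=\theta_x(\theta_x^{-1}(e)e')w_{x,y}$; it is a Sieben twisted module structure (i.e. $\alpha:E(S)\to E(A)$ an isomorphism, $\lambda_s$ endomorphisms, $f(s,t)\in A_{\alpha(stt^{-1}s^{-1})}$, and $f(s,e)=\alpha(ses^{-1})$, $f(e,s)=\alpha(ess^{-1})$ for idempotents $e$, among the twisted-module axioms). For a Sieben structure $(\alpha,\lambda,f)$ over an $E$-unitary $S$, $\Theta^\Lambda=(\theta',w')$ is: $D'_X=\bigsqcup_{s\in X}A_{\alpha(ss^{-1})}$ for $X\in\mathcal G(S)$; $\theta'_X(a)=\lambda_s(a)$ for $a\in D'_{X^{-1}}$, $s\in X$ unique with $\alpha(s^{-1}s)=aa^{-1}$; $w'_{X,Y}a=f(s,s^{-1}t)a$, $aw'_{X,Y}=af(s,s^{-1}t)$ for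 $a\in D'_XD'_{XY}$, $s\in X$, $t\in XY$ unique with $\alpha(ss^{-1})=\alpha(tt^{-1})=aa^{-1}$. *)

From Stdlib Require Import ClassicalEpsilon.

Set Implicit Arguments.
Unset Strict Implicit.

Definition opick {T : Type} (P : T -> Prop) : option T :=
  match excluded_middle_informative (exists t, P t) with
  | left h => Some (proj1_sig (constructive_indefinite_description P h))
  | right _ => None
  end.

Definition pickd {T : Type} (d : T) (P : T -> Prop) : T :=
  match opick P with Some t => t | None => d end.

Record Group := {
  gcar :> Type;
  gmul : gcar -> gcar -> gcar;
  gone : gcar;
  ginv : gcar -> gcar;
  gmulA : forall x y z, gmul x (gmul y z) = gmul (gmul x y) z;
  gmul1 : forall x, gmul gone x = x;
  gmulV : forall x, gmul (ginv x) x = gone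
}.

(* Semilattices of groups: inverse semigroups (with their inversion)  *)
(* whose idempotents are central.  The axioms a a^-1 a = a,            *)
(* a^-1 a a^-1 = a^-1 plus commuting (here: central) idempotents      *)
(* characterize inverse semigroups, sinv being the unique inverse.     *)
Record SLG := {
  scar :> Type;
  smul : scar -> scar -> scar;
  sinv : scar -> scar;
  smulA : forall a b c, smul a (smul b c) = smul (smul a b) c;
  sinv_l : forall a, smul (smul a (sinv a)) a = a;
  sinv_r : forall a, smul (smul (sinv a) a) (sinv a) = sinv a;
  idem_central : forall e a, smul e e = e -> smul e a = smul a e
}.

Section SemilatticeNotions.
Variable A : SLG.

Definition idem (e : A) : Prop := smul e e = e.

Definition inAe (e a : A) : Prop := smul a (sinv a) = e /\ smul (sinv a) a = e.

Definition setprod (I J : A -> Prop) : A -> Prop :=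
  fun c => exists a b, I a /\ J b /\ c = smul a b.

Definition nonempty_ideal (I : A -> Prop) : Prop :=
  (exists a, I a) /\ (forall a b, I a -> I (smul a b) /\ I (smul b a)).

(* (L,R) is a multiplier of the ideal I (maps only matter on I):
   w s = L s, s w = R s. *)
Definition is_multiplier (I : A -> Prop) (L R : A -> A) : Prop :=
  (forall s, I s -> I (L s)) /\ (forall s, I s -> I (R s)) /\
  (forall s t, I s -> I t -> L (smul s t) = smul (L s) t) /\
  (forall s t, I s -> I t -> R (smul s t) = smul s (R t)) /\
  (forall s t, I s -> I t -> smul s (L t) = smul (R s) t).

(* In M(I) the product is (L,R)(L',R') = (L o L', R' o R), identity (id,id).
   (L',R') is the inverse of (L,R) in M(I). *)
Definition multiplier_inverse (I : A -> Prop) (L R L' R' : A -> A) : Prop :=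
  is_multiplier I L' R' /\
  (forall s, I s -> L (L' s) = s /\ L' (L s) = s /\ R (R' s) = s /\ R' (R s) = s).

Definition is_unit_multiplier (I : A -> Prop) (L R : A -> A) : Prop :=
  is_multiplier I L R /\ exists L' R', multiplier_inverse I L R L' R'.

Definition ideal_iso (I J : A -> Prop) (f : A -> A) : Prop :=
  (forall a, I a -> J (f a)) /\
  (forall a b, I a -> I b -> f a = f b -> a = b) /\
  (forall b, J b -> exists a, I a /\ f a = b) /\
  (forall a b, I a -> I b -> f (smul a b) = smul (f a) (f b)).

End SemilatticeNotions.

(* Twisted partial actions  Theta = (theta, w) of G on A.
   D x = D_x, th x = theta_x (on D_{x^-1}),
   w_{x,y} = (wL x y, wR x y) in U(M(D_x D_{xy})). *)
Definition is_twisted_partial_action (G : Group) (A : SLG)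
  (D : G -> A -> Prop) (th : G -> A -> A) (wL wR : G -> G -> A -> A) : Prop :=
  (forall x, nonempty_ideal (D x)) /\
  (forall x, ideal_iso (D (ginv x)) (D x) (th x)) /\
  (forall x y, is_unit_multiplier (setprod (D x) (D (gmul x y))) (wL x y) (wR x y)) /\
  (forall x a, D x a <-> setprod (D x) (D x) a) /\
  (forall x y a, setprod (D x) (D y) a <-> setprod (D y) (D x) a) /\
  (forall a, D (gone G) a) /\ (forall a, th (gone G) a = a) /\
  (forall x y b, setprod (D x) (D (gmul x y)) b <->
     exists a, setprod (D (ginv x)) (D y) a /\ b = th x a) /\
  (* (iv)  theta_x theta_y (s) = w_{x,y} theta_{xy}(s) w_{x,y}^-1 *)
  (forall x y L' R',
     multiplier_inverse (setprod (D x) (D (gmul x y))) (wL x y) (wR x y) L' R' ->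
     forall s, setprod (D (ginv y)) (D (gmul (ginv y) (ginv x))) s ->
       th x (th y s) = R' (wL x y (th (gmul x y) s))) /\
  (forall x a, D x a ->
     wL (gone G) x a = a /\ wR (gone G) x a = a /\
     wL x (gone G) a = a /\ wR x (gone G) a = a) /\
  (forall x y z s,
     setprod (setprod (D (ginv x)) (D y)) (D (gmul y z)) s ->
     wR x (gmul y z) (th x (wR y z s)) = wR (gmul x y) z (wR x y (th x s))).

(* Generic: an inverse semigroup S given as a predicate inS on a carrier
   type T with multiplication mulS; its inverse, idempotents, minimum
   group congruence sigma, the group operations of G(S) = S/sigma on
   sigma-classes, and the twisted partial action Theta^Lambda of G(S)
   built from a Sieben structure Lambda = (alpha, lam, f). *)
Section Generic.
Variable A : SLG.
Variable T : Type.
Variable inS : T -> Prop.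
Variable mulS : T -> T -> T.

Definition invS (s : T) : T :=
  pickd s (fun t => inS t /\ mulS (mulS s t) s = s /\ mulS (mulS t s) t = t).

Definition idemS (s : T) : Prop := inS s /\ mulS s s = s.

Definition group_congruence (rho : T -> T -> Prop) : Prop :=
  (forall s, inS s -> rho s s) /\
  (forall s t, inS s -> inS t -> rho s t -> rho t s) /\
  (forall s t u, inS s -> inS t -> inS u -> rho s t -> rho t u -> rho s u) /\
  (forall s t u, inS s -> inS t -> inS u -> rho s t ->
      rho (mulS s u) (mulS t u) /\ rho (mulS u s) (mulS u t)) /\
  (exists e, inS e /\ forall s, inS s ->
      rho (mulS e s) s /\ rho (mulS s e) s /\
      exists t, inS t /\ rho (mulS s t) e /\ rho (mulS t s) e).

Definition sigmaS (s t : T) : Prop :=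
  inS s /\ inS t /\ forall rho, group_congruence rho -> rho s t.

Definition is_GS_elem (X : T -> Prop) : Prop := exists s, inS s /\ X = sigmaS s.

Definition GSmul (X Y : T -> Prop) : T -> Prop :=
  fun u => exists s t, X s /\ Y t /\ sigmaS (mulS s t) u.
Definition GSinv (X : T -> Prop) : T -> Prop :=
  fun u => exists s, X s /\ sigmaS (invS s) u.

Definition GS_iso (G : Group) (nu : G -> T -> Prop) : Prop :=
  (forall x, is_GS_elem (nu x)) /\
  (forall x y, nu x = nu y -> x = y) /\
  (forall X, is_GS_elem X -> exists x, nu x = X) /\
  (forall x y, nu (gmul x y) = GSmul (nu x) (nu y)).

Variable alpha : T -> A.
Variable lam : T -> A -> A.
Variable f : T -> T -> A.

Definition Dp (X : T -> Prop) : A -> Prop :=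
  fun a => exists s, X s /\ inAe (alpha (mulS s (invS s))) a.

Definition thp (X : T -> Prop) (a : A) : A :=
  match opick (fun s => X s /\ alpha (mulS (invS s) s) = smul a (sinv a)) with
  | Some s => lam s a
  | None => a
  end.

Definition wp_st (X Y : T -> Prop) (a : A) : option (T * T) :=
  opick (fun st => X (fst st) /\ GSmul X Y (snd st) /\
          alpha (mulS (fst st) (invS (fst st))) = smul a (sinv a) /\
          alpha (mulS (snd st) (invS (snd st))) = smul a (sinv a)).

Definition wpL (X Y : T -> Prop) (a : A) : A :=
  match wp_st X Y a with
  | Some st => smul (f (fst st) (mulS (invS (fst st)) (snd st))) a
  | None => a
  end.

Definition wpR (X Y : T -> Prop) (a : A) : A :=
  match wp_st X Y a with
  | Some st => smul a (f (fst st) (mulS (invS (fst st)) (snd st)))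
  | None => a
  end.

End Generic.

(* E(A) *_theta G and the structure Lambda^Theta.  Elements e delta_x
   are represented by pairs (e, x) : A * G with e in E(D_x). *)
Section Crossed.
Variable G : Group.
Variable A : SLG.
Variable D : G -> A -> Prop.
Variable th : G -> A -> A.
Variable wL wR : G -> G -> A -> A.

Definition thinv (x : G) (b : A) : A :=
  pickd b (fun a => D (ginv x) a /\ th x a = b).

Definition cpIn (s : A * G) : Prop := idem (fst s) /\ D (snd s) (fst s).

Definition cpMul (s t : A * G) : A * G :=
  (th (snd s) (smul (thinv (snd s) (fst s)) (fst t)), gmul (snd s) (snd t)).

(* alpha(e delta_1) = e  (only applied to idempotents of S) *)
Definition LamAlpha (s : A * G) : A := fst s.

Definition LamLam (s : A * G) (a : A) : A :=
  th (snd s) (smul (thinv (snd s) (fst s)) a).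

Definition LamF (s t : A * G) : A :=
  wR (snd s) (snd t) (th (snd s) (smul (thinv (snd s) (fst s)) (fst t))).

End Crossed.

Section Specialized.
Variable G : Group.
Variable A : SLG.
Variable D : G -> A -> Prop.
Variable th : G -> A -> A.
Variable wR : G -> G -> A -> A.

Definition Sin := cpIn D.
Definition Smul := cpMul D th.
Definition GSmulC := GSmul Sin Smul.
Definition GSinvC := GSinv Sin Smul.
Definition Dprime := Dp Sin Smul (@LamAlpha G A).
Definition thetaprime := thp Sin Smul (@LamAlpha G A) (LamLam D th).
Definition wprimeL := wpL Sin Smul (@LamAlpha G A) (LamF D th wR).
Definition wprimeR := wpR Sin Smul (@LamAlpha G A) (LamF D th wR).
End Specialized.

(* E(A) *_theta G is E-unitary, and e delta_x, f delta_y are sigma-related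
   exactly when x = y (both lie above (fe) delta_x); hence
   nu x := { e delta_x } is an isomorphism G -> G(E(A) *_theta G).  The element
   of nu x selected for a by theta'_{nu x} is theta_x(a a^-1) delta_x, and the pair
   selected by w'_{nu x, nu y} is ((a a^-1) delta_x, (a a^-1) delta_{xy}); evaluating
   lambda and f on them uses theta_x theta_{x^-1}(e) = e for idempotents e.
   Since a multiplier satisfies w a = (w (a a^-1)) a, the values of w' on
   idempotents determine it, and they agree with those of w. *)

From Pilot Require Import Defs.
From Stdlib Require Import ClassicalEpsilon FunctionalExtensionality PropExtensionality.
Set Implicit Arguments.
Unset Strict Implicit.

Lemma opick_spec (T : Type) (P : T -> Prop) :
  (exists t, P t) -> exists t, opick P = Some t /\ P t.
Proof.
  intro Hex. unfold opick. destruct excluded_middle_informative as [h|h]; [|contradiction].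
  eexists; split; [reflexivity|]. exact (proj2_sig (constructive_indefinite_description P h)).
Qed.

Lemma pickd_spec (T : Type) (d : T) (P : T -> Prop) : (exists t, P t) -> P (pickd d P).
Proof.
  intro Hex. destruct (opick_spec Hex) as [t [E Pt]]. unfold pickd. rewrite E. exact Pt.
Qed.

Lemma pred_ext (T : Type) (P Q : T -> Prop) : (forall u, P u <-> Q u) -> P = Q.
Proof. intro h. apply functional_extensionality. intro u. apply propositional_extensionality, h. Qed.

Section GroupTheory.
Variable G : Group.

Lemma mulgV (x : G) : gmul x (ginv x) = gone G.
Proof.
  set (y := gmul x (ginv x)).
  assert (Hy : gmul y y = y).
  { unfold y. rewrite <- gmulA, (gmulA (ginv x) x (ginv x)), gmulV, gmul1. reflexivity. }
  rewrite <- (gmul1 y), <- (gmulV y) at 1. rewrite <- gmulA, Hy. apply gmulV.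
Qed.

Lemma mulg1 (x : G) : gmul x (gone G) = x.
Proof. rewrite <- (gmulV x), gmulA, mulgV, gmul1. reflexivity. Qed.

Lemma invgK (x : G) : ginv (ginv x) = x.
Proof. rewrite <- (mulg1 (ginv (ginv x))), <- (gmulV x), gmulA, gmulV, gmul1. reflexivity. Qed.

Lemma mulKg (x y : G) : gmul (ginv x) (gmul x y) = y.
Proof. rewrite gmulA, gmulV, gmul1. reflexivity. Qed.

Lemma eq_invg_mul (x z : G) : gmul (gmul x z) x = x -> z = ginv x.
Proof.
  intro E.
  assert (Ezx : gmul z x = gone G).
  { rewrite <- (gmul1 (gmul z x)), <- (gmulV x), <- gmulA, (gmulA x z x), E. reflexivity. }
  rewrite <- (mulg1 z), <- (mulgV x), gmulA, Ezx, gmul1. reflexivity.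
Qed.

End GroupTheory.

Section SemilatticeTheory.
Variable A : SLG.

Lemma idem_mulV (a : A) : idem (smul a (sinv a)).
Proof. unfold idem. rewrite smulA, sinv_l. reflexivity. Qed.

Lemma idem_Vmul (a : A) : idem (smul (sinv a) a).
Proof. unfold idem. rewrite smulA, sinv_r. reflexivity. Qed.

Lemma mul_mulV (a : A) : smul a (smul a (sinv a)) = a.
Proof. rewrite <- (idem_central a (idem_mulV a)). apply sinv_l. Qed.

Lemma idem_mul (e f : A) : idem e -> idem f -> idem (smul e f).
Proof.
  unfold idem; intros He Hf.
  rewrite <- smulA, (smulA f e f), <- (idem_central f He), <- smulA, Hf, smulA, He. reflexivity.
Qed.

Lemma Vmul_mulV (a : A) : smul (sinv a) a = smul a (sinv a).
Proof.
  assert (Hf : smul (sinv a) a = smul (smul a (sinv a)) (smul (sinv a) a)).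
  { transitivity (smul (sinv a) (smul (smul a (sinv a)) a)); [rewrite sinv_l; reflexivity|].
    rewrite smulA, <- (idem_central (sinv a) (idem_mulV a)), <- smulA. reflexivity. }
  assert (He : smul a (sinv a) = smul (smul (sinv a) a) (smul a (sinv a))).
  { transitivity (smul (smul a (smul (sinv a) a)) (sinv a));
      [rewrite (smulA a (sinv a) a), sinv_l; reflexivity|].
    rewrite <- (idem_central a (idem_Vmul a)), <- smulA. reflexivity. }
  rewrite Hf, (idem_central _ (idem_mulV a)). symmetry. exact He.
Qed.

Lemma setprod_mulV (I J : A -> Prop) (a : A) :
  (forall b c, J b -> J (smul b c)) -> setprod I J a -> setprod I J (smul a (sinv a)).
Proof.
  intros HJ (p & q & hp & hq & E). exists p, (smul q (sinv a)).
  split; [exact hp|]. split; [apply HJ, hq|]. rewrite E, smulA. reflexivity.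
Qed.

Lemma setprod_r (I J : A -> Prop) (b : A) :
  (forall a c, J c -> J (smul a c)) -> setprod I J b -> J b.
Proof. intros HJ (p & q & _ & hq & ->). apply HJ, hq. Qed.

Section Multiplier.
Variables (I : A -> Prop) (L R : A -> A).
Hypothesis HLR : is_multiplier I L R.

Lemma multiplier_idem_l (e : A) : I e -> idem e -> L e = smul e (L e).
Proof.
  destruct HLR as (_ & _ & HLm & _). intros Ie He.
  rewrite (idem_central (L e) He), <- HLm by assumption. rewrite He. reflexivity.
Qed.

Lemma multiplier_idem_r (e : A) : I e -> idem e -> R e = smul (R e) e.
Proof.
  destruct HLR as (_ & _ & _ & HRm & _). intros Ie He.
  rewrite <- (idem_central (R e) He), <- HRm by assumption. rewrite He. reflexivity.
Qed.

Lemma multiplier_idem_lr (e : A) : I e -> idem e -> L e = R e.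
Proof.
  intros Ie He. destruct HLR as (_ & _ & _ & _ & Hc).
  rewrite (multiplier_idem_l Ie He), (Hc e e Ie Ie), <- (multiplier_idem_r Ie He). reflexivity.
Qed.

Lemma multiplier_mulV (a : A) : I a -> I (smul a (sinv a)) ->
  L a = smul (R (smul a (sinv a))) a /\ R a = smul a (R (smul a (sinv a))).
Proof.
  destruct HLR as (_ & _ & HLm & HRm & Hc). intros Ia Ie.
  pose proof (idem_mulV a) as He. split.
  - rewrite <- (Hc _ a Ie Ia), (idem_central (L a) He), <- HLm by assumption.
    rewrite mul_mulV. reflexivity.
  - rewrite <- (multiplier_idem_lr Ie He), (Hc a _ Ia Ie).
    rewrite <- (idem_central (R a) He), <- HRm by assumption. rewrite sinv_l. reflexivity.
Qed.

End Multiplier.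

Lemma unit_multiplier_conj_idem (I : A -> Prop) L R L' R' (e : A) :
  is_multiplier I L R -> multiplier_inverse I L R L' R' -> I e -> idem e -> R' (L e) = e.
Proof.
  intros HLR [HLR' Hinv] Ie He. pose proof HLR as (HL & _ & HLm & _).
  pose proof HLR' as (HL' & _ & _ & HRm' & _).
  rewrite (multiplier_idem_l HLR Ie He), (idem_central (L e) He), HRm' by (try apply HL; assumption).
  rewrite <- (multiplier_idem_lr HLR' Ie He), <- HLm by (try apply HL'; assumption).
  rewrite <- (multiplier_idem_l HLR' Ie He). apply (Hinv e Ie).
Qed.
End SemilatticeTheory.

Section GroupCongruence.
Variables (T : Type) (inS : T -> Prop) (mulS : T -> T -> T).
Hypothesis mulS_closed : forall s t, inS s -> inS t -> inS (mulS s t).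

(* A right-absorbing [g] satisfies [g g = g] in the quotient group, so it lies
   in the identity class. *)
Lemma group_congruence_absorb rho g s :
  group_congruence inS mulS rho -> inS g -> inS s ->
  (forall t, inS t -> mulS (mulS t g) g = mulS t g) -> rho (mulS g s) s.
Proof.
  intros (_ & Hsym & Htr & Hc & e0 & He0 & Hid) hg hs Habs.
  assert (Hg : rho g e0).
  { destruct (Hid _ hg) as (h1 & _ & t & ht & _ & h3).
    assert (htg : inS (mulS t g)) by auto.
    assert (he0g : inS (mulS e0 g)) by auto.
    destruct (Hc _ _ _ He0 htg hg (Hsym _ _ htg He0 h3)) as [h4 _].
    rewrite Habs in h4 by exact ht.
    apply (Htr _ _ _ hg he0g He0); [apply Hsym; assumption|].
    apply (Htr _ _ _ he0g htg He0); assumption. }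
  destruct (Hc _ _ _ hg He0 hs Hg) as [h1 _].
  apply (Htr _ _ _ (mulS_closed hg hs) (mulS_closed He0 hs) hs); [exact h1|].
  apply (Hid _ hs).
Qed.

End GroupCongruence.

Section TwistedPartialAction.
Variables (G : Group) (A : SLG) (D : G -> A -> Prop) (th : G -> A -> A).
Variables wL wR : G -> G -> A -> A.
Hypothesis H : is_twisted_partial_action D th wL wR.

Local Notation inS := (cpIn D).
Local Notation mulS := (cpMul D th).
Local Notation invS := (invS (cpIn D) (cpMul D th)).
Local Notation thinv := (thinv D th).

Lemma D_ideal x : nonempty_ideal (D x).
Proof. apply H. Qed.
Lemma th_ideal_iso x : ideal_iso (D (ginv x)) (D x) (th x).
Proof. apply H. Qed.
Lemma w_unit_multiplier x y :
  is_unit_multiplier (setprod (D x) (D (gmul x y))) (wL x y) (wR x y).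
Proof. apply H. Qed.
Lemma D1 a : D (gone G) a.
Proof. apply H. Qed.
Lemma th1 a : th (gone G) a = a.
Proof. apply H. Qed.
Lemma setprod_D_th x y b : setprod (D x) (D (gmul x y)) b <->
  exists a, setprod (D (ginv x)) (D y) a /\ b = th x a.
Proof. apply H. Qed.
Lemma th_th x y L' R' :
  multiplier_inverse (setprod (D x) (D (gmul x y))) (wL x y) (wR x y) L' R' ->
  forall s, setprod (D (ginv y)) (D (gmul (ginv y) (ginv x))) s ->
  th x (th y s) = R' (wL x y (th (gmul x y) s)).
Proof. apply H. Qed.

Lemma D_mulr x a b : D x a -> D x (smul a b).
Proof. apply (proj2 (D_ideal x)). Qed.
Lemma D_mull x a b : D x b -> D x (smul a b).
Proof. intro h. apply (proj2 (D_ideal x) b a h). Qed.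

Lemma th_in x a : D (ginv x) a -> D x (th x a).
Proof. apply (th_ideal_iso x). Qed.
Lemma th_inj x a b : D (ginv x) a -> D (ginv x) b -> th x a = th x b -> a = b.
Proof. apply (th_ideal_iso x). Qed.
Lemma th_mul x a b :
  D (ginv x) a -> D (ginv x) b -> th x (smul a b) = smul (th x a) (th x b).
Proof. apply (th_ideal_iso x). Qed.

Lemma th_idem x a : D (ginv x) a -> idem a -> idem (th x a).
Proof. unfold idem; intros ha hi. rewrite <- th_mul, hi by assumption. reflexivity. Qed.

Lemma thV_in x e : D x e -> D (ginv x) (th (ginv x) e).
Proof. intro he. apply th_in. rewrite invgK. exact he. Qed.

Lemma thV_idem x e : D x e -> idem e -> idem (th (ginv x) e).
Proof. intros he hi. apply th_idem; [rewrite invgK|]; assumption. Qed.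

Lemma thinvP x b : D x b -> D (ginv x) (thinv x b) /\ th x (thinv x b) = b.
Proof. intro hb. unfold Defs.thinv. apply pickd_spec, (th_ideal_iso x), hb. Qed.

Lemma thinv_th x a : D (ginv x) a -> thinv x (th x a) = a.
Proof.
  intro ha. destruct (thinvP (th_in ha)) as [h1 h2]. apply (th_inj h1 ha h2).
Qed.

Lemma thinv_idem x e : D x e -> idem e -> idem (thinv x e).
Proof.
  intros he hi. destruct (thinvP he) as [h1 h2]. unfold idem.
  apply (th_inj (D_mulr _ h1) h1). rewrite th_mul, h2 by assumption. exact hi.
Qed.

Lemma thinv1 b : thinv (gone G) b = b.
Proof. destruct (thinvP (D1 b)) as [_ h]. rewrite th1 in h. exact h. Qed.

(* Axiom (iv) for y = x^-1: conjugation by w_{x,x^-1} fixes idempotents. *)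
Lemma th_thV_idem x e : D x e -> idem e -> th x (th (ginv x) e) = e.
Proof.
  intros he hi. destruct (w_unit_multiplier x (ginv x)) as [Hm [L' [R' Hinv]]].
  assert (Hs : setprod (D (ginv (ginv x))) (D (gmul (ginv (ginv x)) (ginv x))) e).
  { rewrite invgK, mulgV. exists e, e. split; [exact he|]. split; [apply D1|]. symmetry; exact hi. }
  rewrite (th_th Hinv Hs), mulgV, th1 in *.
  apply (unit_multiplier_conj_idem Hm Hinv); [|exact hi].
  exists e, e. split; [exact he|]. split; [apply D1|]. symmetry; exact hi.
Qed.

Lemma thinv_idemE x e : D x e -> idem e -> thinv x e = th (ginv x) e.
Proof.
  intros he hi. rewrite <- (th_thV_idem he hi) at 1. apply thinv_th, thV_in, he.
Qed.

Lemma thinvV_idemE x c : D (ginv x) c -> idem c -> thinv (ginv x) c = th x c.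
Proof. intros hc hi. rewrite (thinv_idemE hc hi), invgK. reflexivity. Qed.

Lemma cpMul_pair e x f y : mulS (e, x) (f, y) = (th x (smul (thinv x e) f), gmul x y).
Proof. reflexivity. Qed.

Lemma cpMul_closed s t : inS s -> inS t -> inS (mulS s t).
Proof.
  destruct s as [e x], t as [f y]. unfold cpIn; simpl. intros [he hx] [hf hy].
  destruct (thinvP hx) as [hc _]. split.
  - apply th_idem; [apply D_mulr, hc|]. apply idem_mul; [apply thinv_idem|]; assumption.
  - apply (setprod_r (I := D x)); [intros; apply D_mull; assumption|].
    apply setprod_D_th. exists (smul (thinv x e) f). split; [|reflexivity].
    exists (thinv x e), f. auto.
Qed.

Lemma cpIn_mulV a x : D x a -> inS (smul a (sinv a), x).
Proof. intro ha. split; [apply idem_mulV | apply D_mulr, ha]. Qed.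

Lemma cpIn_fiber x : exists e, inS (e, x).
Proof. destruct (proj1 (D_ideal x)) as [a ha]. exists (smul a (sinv a)). apply cpIn_mulV, ha. Qed.

Lemma cpInv_pair e x : inS (e, x) -> invS (e, x) = (th (ginv x) e, ginv x).
Proof.
  unfold cpIn; simpl. intros [he hx].
  pose proof (thV_in hx) as hc. pose proof (thV_idem hx he) as hci.
  pose proof (th_thV_idem hx he) as hce. pose proof (thinv_idemE hx he) as hte.
  pose proof (thinvV_idemE hc hci) as htc. rewrite hce in htc.
  assert (Huniq : forall t, inS t /\ mulS (mulS (e, x) t) (e, x) = (e, x) /\
      mulS (mulS t (e, x)) t = t -> t = (th (ginv x) e, ginv x)).
  { intros [f z] ([hf hz] & h1 & h2). simpl in hf, hz.
    assert (Hz : z = ginv x) by (apply eq_invg_mul; exact (f_equal snd h1)).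
    subst z. rewrite !cpMul_pair, hte, mulgV, th1, thinv1 in h1. injection h1 as E1 _.
    assert (Ecf : smul (th (ginv x) e) f = th (ginv x) e).
    { apply (th_inj (D_mulr _ hc) hc).
      assert (Eg : smul (th x (smul (th (ginv x) e) f)) (th x (th (ginv x) e))
                   = th x (smul (th (ginv x) e) f)).
      { rewrite <- th_mul by (try apply D_mulr; assumption).
        f_equal. rewrite <- smulA, (idem_central _ hf), smulA, hci. reflexivity. }
      rewrite hce, E1 in Eg. rewrite hce. symmetry. exact Eg. }
    rewrite !cpMul_pair, gmulV, th1, thinv1, (thinvV_idemE hz hf) in h2. injection h2 as E2 _.
    assert (E3 : smul (th x f) e = e).
    { rewrite <- hce at 1. rewrite <- th_mul by assumption.
      rewrite (idem_central _ hf), Ecf. exact hce. }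
    rewrite E3, Ecf in E2. rewrite E2. reflexivity. }
  apply Huniq. unfold Defs.invS. apply pickd_spec. exists (th (ginv x) e, ginv x). split; [split; assumption|]. split.
  - rewrite !cpMul_pair, hte, hci, hce, mulgV, th1, thinv1, gmul1, he. reflexivity.
  - rewrite !cpMul_pair, htc, he, gmulV, th1, thinv1, hci, gmul1. reflexivity.
Qed.

Lemma cpInv_in s : inS s -> inS (invS s).
Proof.
  destruct s as [e x]. intro hs. rewrite cpInv_pair by exact hs. destruct hs as [he hx].
  split; [apply thV_idem | apply thV_in]; assumption.
Qed.

Lemma group_congruence_snd : group_congruence inS mulS (fun s t => snd s = snd t).
Proof.
  split; [reflexivity|]. split; [intros; symmetry; assumption|].
  split; [intros s t u _ _ _ h1 h2; rewrite h1; exact h2|].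
  split; [intros s t u _ _ _ h; simpl; rewrite h; split; reflexivity|].
  destruct (cpIn_fiber (gone G)) as [e1 he1]. exists (e1, gone G). split; [exact he1|].
  intros [f x] _. simpl. split; [apply gmul1|]. split; [apply mulg1|].
  destruct (cpIn_fiber (ginv x)) as [e2 he2]. exists (e2, ginv x).
  split; [exact he2|]. split; [apply mulgV | apply gmulV].
Qed.

Lemma sigmaS_snd s t : sigmaS inS mulS s t <-> inS s /\ inS t /\ snd s = snd t.
Proof.
  split.
  - intros (hs & ht & h). split; [exact hs|]. split; [exact ht|]. apply h, group_congruence_snd.
  - destruct s as [e x], t as [f y]. intros (hs & ht & hst). simpl in hst. subst y. unfold cpIn in hs, ht; simpl in hs, ht.
    split; [exact hs|]. split; [exact ht|]. intros rho Hrho.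
    pose proof Hrho as (_ & Hsym & Htr & _).
    assert (Hunit : forall g r, idem g -> inS r -> rho (mulS (g, gone G) r) r).
    { intros g [c z] hg hr. apply (group_congruence_absorb cpMul_closed); try assumption.
      - split; [exact hg | apply D1].
      - intros [c' z'] [_ hz']. rewrite !cpMul_pair, mulg1, thinv_th.
        + rewrite <- smulA, hg, mulg1. reflexivity.
        + apply D_mulr, (thinvP hz'). }
    assert (Hmul1 : forall g c z, mulS (g, gone G) (c, z) = (smul g c, z)).
    { intros g c z. rewrite cpMul_pair, th1, thinv1, gmul1. reflexivity. }
    pose proof (Hunit f (e, x) (proj1 ht) hs) as k1.
    pose proof (Hunit e (f, x) (proj1 hs) ht) as k2.
    rewrite Hmul1 in k1, k2. rewrite (idem_central f (proj1 hs)) in k2.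
    assert (hfe : inS (smul f e, x)).
    { split; [apply idem_mul; [apply ht | apply hs] | apply D_mull, hs]. }
    apply (Htr (e, x) _ (f, x) hs hfe ht); [apply Hsym|]; assumption.
Qed.

Definition nu (x : G) : A * G -> Prop := fun u => inS u /\ snd u = x.

Lemma nu_sigmaS s : inS s -> nu (snd s) = sigmaS inS mulS s.
Proof.
  intro hs. apply pred_ext. intro u. rewrite sigmaS_snd. unfold nu. split.
  - intros [hu e]. auto.
  - intros (_ & hu & e). auto.
Qed.

Lemma GSmul_nu x y : GSmul inS mulS (nu x) (nu y) = nu (gmul x y).
Proof.
  apply pred_ext. intro u. unfold GSmul, nu. split.
  - intros (s & t & [hs hsx] & [ht hty] & hsig). apply sigmaS_snd in hsig.
    destruct hsig as (_ & hu & e). simpl in e. rewrite hsx, hty in e. auto.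
  - intros [hu hux]. destruct (cpIn_fiber x) as [e he]. destruct (cpIn_fiber y) as [f hf].
    exists (e, x), (f, y). split; [auto|]. split; [auto|].
    apply sigmaS_snd. split; [apply cpMul_closed; assumption|]. auto.
Qed.

Lemma GSinv_nu x : GSinv inS mulS (nu x) = nu (ginv x).
Proof.
  apply pred_ext. intro u. unfold GSinv, nu. split.
  - intros ([f y] & [hs hsx] & hsig). apply sigmaS_snd in hsig. simpl in hsx. subst y.
    destruct hsig as (_ & hu & e). rewrite cpInv_pair in e by exact hs. auto.
  - intros [hu hux]. destruct (cpIn_fiber x) as [e he]. exists (e, x). split; [auto|].
    apply sigmaS_snd. split; [apply cpInv_in, he|]. split; [exact hu|].
    rewrite cpInv_pair by exact he. auto.
Qed.

Lemma nu_iso : GS_iso inS mulS nu.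
Proof.
  split; [|split; [|split]].
  - intro x. destruct (cpIn_fiber x) as [e he]. exists (e, x). split; [exact he|].
    exact (nu_sigmaS he).
  - intros x y E. destruct (cpIn_fiber x) as [e he].
    assert (h : nu y (e, x)) by (rewrite <- E; split; [exact he | reflexivity]).
    exact (proj2 h).
  - intros X [s [hs ->]]. exists (snd s). apply (nu_sigmaS hs).
  - intros x y. symmetry. apply GSmul_nu.
Qed.

Lemma alpha_mulV e x : inS (e, x) -> LamAlpha (mulS (e, x) (invS (e, x))) = e.
Proof.
  intro hs. rewrite cpInv_pair by exact hs. destruct hs as [he hx]. simpl in he, hx.
  unfold LamAlpha; simpl. rewrite (thinv_idemE hx he), (thV_idem hx he), (th_thV_idem hx he).
  reflexivity.
Qed.

Lemma alpha_Vmul e x : inS (e, x) -> LamAlpha (mulS (invS (e, x)) (e, x)) = thinv x e.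
Proof.
  intro hs. rewrite cpInv_pair by exact hs. destruct hs as [he hx]. simpl in he, hx.
  unfold LamAlpha; simpl.
  rewrite (thinvV_idemE (thV_in hx) (thV_idem hx he)), (th_thV_idem hx he), he.
  symmetry. apply thinv_idemE; assumption.
Qed.

Lemma Dp_nu x a : Dp inS mulS (@LamAlpha G A) (nu x) a <-> D x a.
Proof.
  unfold Dp, nu. split.
  - intros ([e y] & [hs hy] & ha & _). simpl in hy. subst y.
    rewrite alpha_mulV in ha by exact hs. rewrite <- (sinv_l a), ha. apply D_mulr, hs.
  - intro ha. exists (smul a (sinv a), x). split; [split; [apply cpIn_mulV, ha | reflexivity]|].
    rewrite alpha_mulV by apply cpIn_mulV, ha. split; [reflexivity | apply Vmul_mulV].
Qed.

Lemma thp_nu x a : D (ginv x) a ->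
  thp inS mulS (@LamAlpha G A) (LamLam D th) (nu x) a = th x a.
Proof.
  intro ha. unfold thp.
  assert (hs : inS (th x (smul a (sinv a)), x)).
  { split; [apply th_idem; [apply D_mulr, ha | apply idem_mulV] | apply th_in, D_mulr, ha]. }
  match goal with |- context [opick ?P] =>
    destruct (@opick_spec _ P) as [[e y] [E [[hs' hy] Ps]]] end; [|rewrite E].
  - exists (th x (smul a (sinv a)), x). split; [split; [exact hs | reflexivity]|].
    rewrite alpha_Vmul by exact hs. apply thinv_th, D_mulr, ha.
  - simpl in hy. subst y. rewrite alpha_Vmul in Ps by exact hs'.
    unfold LamLam; simpl. rewrite Ps, sinv_l. reflexivity.
Qed.

Lemma LamF_mulV e x y : inS (e, x) -> D (gmul x y) e ->
  LamF D th wR (e, x) (mulS (invS (e, x)) (e, gmul x y)) = wR x y e.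
Proof.
  intros hs hxy. rewrite cpInv_pair by exact hs. destruct hs as [he hx]; simpl in he, hx.
  unfold LamF; simpl. rewrite thinv_th by (rewrite invgK; exact hx).
  rewrite he, (thinv_idemE hx he), (thV_idem hx he), (th_thV_idem hx he), mulKg.
  reflexivity.
Qed.

Lemma wp_nu x y a : setprod (D x) (D (gmul x y)) a ->
  wpL inS mulS (@LamAlpha G A) (LamF D th wR) (nu x) (nu y) a
    = smul (wR x y (smul a (sinv a))) a /\
  wpR inS mulS (@LamAlpha G A) (LamF D th wR) (nu x) (nu y) a
    = smul a (wR x y (smul a (sinv a))).
Proof.
  intro ha.
  assert (hxy : D (gmul x y) a).
  { apply (setprod_r (I := D x)); [intros; apply D_mull|]; assumption. }
  assert (hx : D x a) by (destruct ha as (p & q & hp & _ & ->); apply D_mulr, hp).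
  pose proof (cpIn_mulV hx) as hs1. pose proof (cpIn_mulV hxy) as hs2.
  unfold wpL, wpR, wp_st.
  match goal with |- context [opick ?P] =>
    destruct (@opick_spec _ P) as [[[e1 x1] [e2 z]] [E [[hs1' hx1] [hst [P1 P2]]]]] end;
    [|rewrite E].
  - exists ((smul a (sinv a), x), (smul a (sinv a), gmul x y)). cbn [fst snd].
    rewrite GSmul_nu. split; [split; [exact hs1 | reflexivity]|].
    split; [split; [exact hs2 | reflexivity]|].
    rewrite !alpha_mulV by assumption. split; reflexivity.
  - cbn [fst snd] in *. subst x1. rewrite GSmul_nu in hst. destruct hst as [hs2' hz].
    simpl in hz. subst z. rewrite (alpha_mulV hs1') in P1. rewrite (alpha_mulV hs2') in P2.
    subst e1 e2. rewrite (LamF_mulV hs1' (proj2 hs2')). split; reflexivity.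
Qed.

Lemma w_wp x y a : setprod (D x) (D (gmul x y)) a ->
  wL x y a = wprimeL D th wR (nu x) (nu y) a /\ wR x y a = wprimeR D th wR (nu x) (nu y) a.
Proof.
  intro ha. destruct (wp_nu ha) as [E1 E2]. unfold wprimeL, wprimeR, Sin, Smul.
  rewrite E1, E2. apply (multiplier_mulV (proj1 (w_unit_multiplier x y)) ha).
  apply setprod_mulV; [intros; apply D_mulr; assumption | exact ha].
Qed.

End TwistedPartialAction.

Theorem proposition9p2 (G : Group) (A : SLG)
  (D : G -> A -> Prop) (th : G -> A -> A) (wL wR : G -> G -> A -> A) :
  is_twisted_partial_action D th wL wR ->
  exists nu : G -> (A * G -> Prop),
    (* nu : G -> G(E(A) *_theta G) is a group isomorphism *)
    GS_iso (Sin D) (Smul D th) nu /\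
    forall x y : G,
      (* theta_x = theta'_{nu x}, as isomorphisms D_{x^-1} -> D_x *)
      (forall a, D (ginv x) a <-> Dprime D th (GSinvC D th (nu x)) a) /\
      (forall a, D x a <-> Dprime D th (nu x) a) /\
      (forall a, D (ginv x) a -> th x a = thetaprime D th (nu x) a) /\
      (* w_{x,y} = w'_{nu x, nu y}, as multipliers of D_x D_{xy} *)
      (forall a, setprod (D x) (D (gmul x y)) a <->
         setprod (Dprime D th (nu x)) (Dprime D th (GSmulC D th (nu x) (nu y))) a) /\
      (forall a, setprod (D x) (D (gmul x y)) a ->
         wL x y a = wprimeL D th wR (nu x) (nu y) a /\
         wR x y a = wprimeR D th wR (nu x) (nu y) a).
Proof.
  intro H. exists (nu D). split; [exact (nu_iso H)|].
  intros x y. unfold Dprime, GSinvC, GSmulC, thetaprime, Sin, Smul.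
  rewrite (GSinv_nu H), (GSmul_nu H).
  assert (HDp : forall z, Dp (cpIn D) (cpMul D th) (@LamAlpha G A) (nu D z) = D z).
  { intro z. apply pred_ext. intro a. apply (Dp_nu H). }
  rewrite !HDp. split; [tauto|]. split; [tauto|]. split; [|split; [tauto|]].
  - intros a ha. symmetry. apply (thp_nu H ha).
  - intros a ha. apply (w_wp H ha).
Qed.
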